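(* For any distribution $\mathbf{p}$ over $[n]$ and any distribution $\mathbf{q}$ over $[k]$, \[ d_{TV}(\mathbf{p},\mathcal{P}_{\mathbf{q}}) \geq \frac12 \min_f \sum_{j=1}^k \Big| \mathbf{q}(j) - \sum_{t:\, f(t)=j}\mathbf{p}(t)\Big|, \] where the minimum is over all nondecreasing functions $f\colon[n]\to[k]$.
   Context: Let $\mathcal{J}_{n,k}$ be the set of all ordered partitions $(I_1,\dots,I_k)$ of $[n]$ into $k$ pairwise disjoint consecutive intervals (in increasing order), each possibly empty. $\mathcal{P}_{\mathbf{q}}$ is the set of distributions $\mathbf{p}'$ over $[n]$ for which some $(I_1,\dots,I_k)\in\mathcal{J}_{n,k}$ satisfies $\mathbf{p}'(I_j)=\mathbf{q}(j)$ for all $j\in[k]$, and $d_{TV}(\mathbf{p},\mathcal{P}_{\mathbf{q}})=\min_{\mathbf{p}'\in\mathcal{P}_{\mathbf{q}}}\frac12\sum_{i=1}^n|\mathbf{p}(i)-\mathbf{p}'(i)|$. *)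

From mathcomp Require Import all_boot all_order all_algebra.
Set Implicit Arguments. Unset Strict Implicit. Unset Printing Implicit Defensive.
Import Order.TTheory GRing.Theory Num.Theory.
Local Open Scope ring_scope.

(* [n] is modelled by 'I_n = {0,...,n-1} (shift by one). *)

Definition is_distr (R : realFieldType) (n : nat) (p : 'I_n -> R) : Prop :=
  (forall i, 0 <= p i) /\ \sum_(i < n) p i = 1.

Definition dTV (R : realFieldType) (n : nat) (p p' : 'I_n -> R) : R :=
  2^-1 * \sum_(i < n) `|p i - p' i|.

Definition is_interval (n : nat) (I : {set 'I_n}) : Prop :=
  forall x y z : 'I_n, x \in I -> z \in I -> (x <= y)%N -> (y <= z)%N -> y \in I.

Definition in_J (n k : nat) (I : 'I_k -> {set 'I_n}) : Prop :=
  [/\ (forall j, is_interval (I j)),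
      (forall j j', j != j' -> [disjoint I j & I j']),
      (forall t : 'I_n, exists j, t \in I j) &
      (forall (j j' : 'I_k) (x y : 'I_n),
          (j < j')%N -> x \in I j -> y \in I j' -> (x < y)%N)].

Definition in_Pq (R : realFieldType) (n k : nat) (q : 'I_k -> R)
  (p' : 'I_n -> R) : Prop :=
  is_distr p' /\
  exists I : 'I_k -> {set 'I_n},
    in_J I /\ forall j, \sum_(i in I j) p' i = q j.

Definition nondecreasing_map (n k : nat) (f : 'I_n -> 'I_k) : Prop :=
  forall s t : 'I_n, (s <= t)%N -> (f s <= f t)%N.

From mathcomp Require Import all_boot all_order all_algebra.
Set Implicit Arguments. Unset Strict Implicit. Unset Printing Implicit Defensive.
Import Order.TTheory GRing.Theory Num.Theory.
Local Open Scope ring_scope.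

(* A partition (I_1, ..., I_k) in J_{n,k} is the family of fibres of the
   nondecreasing map f sending t to the index of its block.  For p' with
   p'(I_j) = q(j), the j-th term q(j) - p(f^-1(j)) is then the sum of
   p'(t) - p(t) over the fibre of j, so the triangle inequality on each fibre
   bounds the sum over j by the l1 distance between p and p'. *)

Lemma sum_norm_fibre_sumB_le (R : numDomainType) (I J : finType) (f : I -> J)
    (a b : I -> R) :
  \sum_(j : J) `|\sum_(t | f t == j) a t - \sum_(t | f t == j) b t|
    <= \sum_(t : I) `|a t - b t|.
Proof.
rewrite (partition_big f xpredT) //=; apply: ler_sum => j _.
by rewrite -sumrB ler_norm_sum.
Qed.

Section BlockIndex.

Variables (n k : nat) (I : 'I_k -> {set 'I_n}).
Hypothesis I_cover : forall t : 'I_n, exists j, t \in I j.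
Hypothesis I_disjoint : forall j j', j != j' -> [disjoint I j & I j'].
Hypothesis I_increasing : forall (j j' : 'I_k) (x y : 'I_n),
  (j < j')%N -> x \in I j -> y \in I j' -> (x < y)%N.

Definition block_index (t : 'I_n) : 'I_k := xchoose (I_cover t).

Lemma mem_block_index t : t \in I (block_index t).
Proof. exact: (xchooseP (I_cover t)). Qed.

Lemma block_indexE t j : (block_index t == j) = (t \in I j).
Proof.
apply/eqP/idP => [<- | tIj]; first exact: mem_block_index.
apply/eqP; apply: contraT => neq.
by rewrite -(disjointFr (I_disjoint neq) (mem_block_index t)).
Qed.

Lemma block_index_nondecreasing : nondecreasing_map block_index.
Proof.
move=> s t le_st; rewrite leqNgt; apply/negP => lt_ts.
have := I_increasing lt_ts (mem_block_index t) (mem_block_index s).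
by rewrite ltnNge le_st.
Qed.

End BlockIndex.

Theorem fact1 (R : realFieldType) (n k : nat) (p : 'I_n -> R) (q : 'I_k -> R) :
  is_distr p -> is_distr q ->
  forall p' : 'I_n -> R, in_Pq q p' ->
  exists f : 'I_n -> 'I_k, nondecreasing_map f /\
    2^-1 * \sum_(j < k) `|q j - \sum_(t < n | f t == j) p t| <= dTV p p'.
Proof.
move=> _ _ p' [_ [I [[_ disj cover incr] p'I]]].
exists (block_index cover); split; first exact: block_index_nondecreasing.
rewrite /dTV ler_wpM2l ?invr_ge0 ?ler0n //.
have q_fibre j : q j = \sum_(t < n | block_index cover t == j) p' t.
  by rewrite -p'I; apply: eq_bigl => t; rewrite block_indexE.
under eq_bigr do rewrite q_fibre.
by rewrite (le_trans (sum_norm_fibre_sumB_le _ _ _)) // ler_sum // => t _; rewrite distrC.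
Qed.
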